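(* For infinitely many positive integers $n$ there is a directed tree with $n$ vertices in which every directed path has length at most one (i.e. every vertex is a source or a sink) and whose span is greater than $\log_2 n/(2\log_2\log_2 n)$.
   Context: A directed tree is a DAG (directed acyclic graph) whose underlying undirected graph is a tree. A source (sink) is a vertex with no incoming (outgoing) edge. An upward-planar layered drawing of a DAG $G$ maps each vertex $v$ to a point in the plane whose y-coordinate $y(v)$ is an integer, and each edge $(u,v)$ (directed from tail $u$ to head $v$) to a strictly y-monotone curve going upward from $u$ to $v$ (so $y(u)<y(v)$), such that no two edges intersect except at common endpoints. The span of an edge $(u,v)$ in such a drawing $\Gamma$ is $y(v)-y(u)$; the span of $\Gamma$ is the maximum span of its edges; the span of an upward-planar DAG is the minimum span over all its upward-planar layered drawings. The length of a directed path is its number of edges. *)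

From Stdlib Require Import Reals ZArith.
From mathcomp Require Import all_boot.

Set Implicit Arguments. Unset Strict Implicit. Unset Printing Implicit Defensive.

(* A directed graph on vertex set 'I_n is an edge relation E : rel 'I_n;
   E u v means there is an edge directed from tail u to head v. *)

Definition dag (n : nat) (E : rel 'I_n) : Prop :=
  forall (u : 'I_n) (p : seq 'I_n), path E u p -> last u p = u -> p = [::].

Definition symrel (n : nat) (E : rel 'I_n) : rel 'I_n :=
  fun u v => E u v || E v u.

Definition undirected_tree (n : nat) (E : rel 'I_n) : Prop :=
  (forall u v : 'I_n, connect (symrel E) u v) /\
  (forall c : seq 'I_n, 3 <= size c -> uniq c -> ~~ cycle (symrel E) c).

Definition directed_tree (n : nat) (E : rel 'I_n) : Prop :=
  dag E /\ undirected_tree E.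

Definition paths_length_le1 (n : nat) (E : rel 'I_n) : Prop :=
  forall u v w : 'I_n, E u v -> E v w -> False.

Local Open Scope R_scope.

(* An upward-planar layered drawing: vertex v is drawn at the point
   (x v, IZR (y v)) with integer y-coordinate; the edge (u,v) is drawn as the
   strictly y-monotone curve {(g u v t, t) | IZR (y u) <= t <= IZR (y v)},
   i.e. the graph of a continuous function t |-> g u v t of the height t. *)
Definition upward_planar_layered_drawing (n : nat) (E : rel 'I_n)
    (x : 'I_n -> R) (y : 'I_n -> Z) (g : 'I_n -> 'I_n -> R -> R) : Prop :=
  (forall u v : 'I_n, x u = x v -> y u = y v -> u = v) /\
  (forall u v : 'I_n, E u v -> (y u < y v)%Z) /\
  (forall u v : 'I_n, E u v -> forall t : R, continuity_pt (g u v) t) /\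
  (forall u v : 'I_n, E u v ->
     g u v (IZR (y u)) = x u /\ g u v (IZR (y v)) = x v) /\
  (forall u v w : 'I_n, E u v -> w <> u -> w <> v ->
     IZR (y u) <= IZR (y w) <= IZR (y v) -> g u v (IZR (y w)) <> x w) /\
  (forall u v u' v' : 'I_n, E u v -> E u' v' -> (u, v) <> (u', v') ->
     forall t : R,
       IZR (y u) <= t <= IZR (y v) -> IZR (y u') <= t <= IZR (y v') ->
       g u v t = g u' v' t ->
       exists w : 'I_n, (w = u \/ w = v) /\ (w = u' \/ w = v') /\ t = IZR (y w)).

Definition upward_planar (n : nat) (E : rel 'I_n) : Prop :=
  exists x y g, @upward_planar_layered_drawing n E x y g.

(* "span of E is greater than c": E has an upward-planar layered drawing
   (so the span, a minimum over a nonempty set of naturals, is defined) and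
   every such drawing has an edge of span y v - y u greater than c. *)
Definition span_gt (n : nat) (E : rel 'I_n) (c : R) : Prop :=
  upward_planar E /\
  forall x y g, @upward_planar_layered_drawing n E x y g ->
    exists u v : 'I_n, E u v /\ IZR (y v - y u) > c.

Definition log2 (r : R) : R := ln r / ln 2.

(* The witness is the complete b-ary tree of depth D whose edges are oriented
   so that even levels are sources and odd levels are sinks, with b = 2S+1 and
   D = S+1.  It has n vertices with 2^(S+1) <= n <= (S+1)^(2S), whence
   log2 n / (2 log2 log2 n) <= S.  Drawing level k on the vertical line x = k,
   with every subtree in its own band of heights, gives an upward-planar
   straight-line drawing.  Conversely, suppose some drawing has span at most S.
   If every child edge of a vertex v has span < d, then among the b > 2S
   children of v three lie at the same height; the edges from v to the two
   outer ones (in x-order) enclose every other edge at the middle child, whose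
   child edges therefore have span < d-1.  Starting with d = S+1 at the root
   and descending S levels gives a vertex whose child edges have span < 1,
   which is absurd. *)

From Stdlib Require Import Reals ZArith Lra Lia Classical.
From mathcomp Require Import all_boot zify.

Set Implicit Arguments. Unset Strict Implicit. Unset Printing Implicit Defensive.

Open Scope R_scope.

(** * Upward-planar drawings of graphs without directed paths of length two *)

Lemma continuous_sign_stable (f : R -> R) (a t : R) : continuity f ->
  (forall s, Rmin a t <= s <= Rmax a t -> f s <> 0) -> 0 < f a -> 0 < f t.
Proof.
move=> cf nz fa; apply: Rnot_le_lt => ft.
have [z [hz fz]] : exists z, Rmin a t <= z <= Rmax a t /\ f z = 0.
  have sgn : f a * f t <= 0 /\ f t * f a <= 0 by split; nra.
  case: (Rle_dec a t) => hat.
    rewrite Rmin_left ?Rmax_right //.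
    by have [z hz] := @IVT_cor f a t cf hat sgn.1; exists z.
  rewrite Rmin_right ?Rmax_left; try lra.
  by have [z hz] := @IVT_cor f t a cf (Rlt_le _ _ (Rnot_le_lt _ _ hat)) sgn.2; exists z.
exact: nz hz fz.
Qed.

Section UpwardPlanarDrawing.

Variables (n : nat) (E : rel 'I_n) (x : 'I_n -> R) (y : 'I_n -> Z)
  (g : 'I_n -> 'I_n -> R -> R).
Hypothesis drawing : upward_planar_layered_drawing E x y g.
Hypothesis no_path2 : paths_length_le1 E.

Definition in_edge_range (u v : 'I_n) (t : R) := IZR (y u) <= t <= IZR (y v).

Lemma edge_curves_order_stable (u v u' v' : 'I_n) (a t : R) :
  E u v -> E u' v' -> u <> u' -> u <> v' -> v <> u' -> v <> v' ->
  in_edge_range u v a -> in_edge_range u' v' a ->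
  in_edge_range u v t -> in_edge_range u' v' t ->
  g u v a < g u' v' a -> g u v t < g u' v' t.
Proof.
move=> Euv Euv' uu' uv' vu' vv' ha ha' ht ht' lt_a.
have [_ [_ [cont [_ [_ cross]]]]] := drawing.
suff : 0 < g u' v' t - g u v t by lra.
apply: (@continuous_sign_stable (fun s => g u' v' s - g u v s) a); last lra.
  by move=> s; apply: continuity_pt_minus; apply: cont.
move=> s hs /Rminus_diag_uniq eq_s.
have between : forall p q, IZR p <= a <= IZR q -> IZR p <= t <= IZR q -> IZR p <= s <= IZR q.
  move=> p q [pa aq] [pt tq].
  have := Rmin_glb _ _ _ pa pt; have := Rmax_lub _ _ _ aq tq; lra.
have [w [hw [hw' _]]] := cross _ _ _ _ Euv Euv' (fun e => uu' (f_equal fst e)) s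
  (between _ _ ha ht) (between _ _ ha' ht') (esym eq_s).
by case: hw hw' => -> [].
Qed.

(* The edges v -> ci and p -> c share no endpoint, so they keep their left-right
   order between the heights of v and c. *)
Lemma out_edge_separates (v ci p c : 'I_n) :
  E v ci -> E p c -> y ci = y c -> ci <> c -> p <> v -> (y p <= y v)%Z ->
  (x ci < x c -> x v < g p c (IZR (y v))) /\ (x c < x ci -> g p c (IZR (y v)) < x v).
Proof.
move=> Eci Epc yci cic pv /IZR_le pv_le.
have [_ [up [_ [ends _]]]] := drawing.
have vci := up _ _ Eci; rewrite yci in vci.
have vc : IZR (y v) <= IZR (y c) by apply/IZR_le/Z.lt_le_incl.
have vc' : v <> c by move=> e; rewrite e in vci; lia.
have cip : ci <> p by move=> e; rewrite e in Eci; apply: (no_path2 Eci Epc).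
have rng : forall t, IZR (y v) <= t <= IZR (y c) ->
    in_edge_range v ci t /\ in_edge_range p c t.
  by move=> t ht; rewrite /in_edge_range yci; lra.
have [rc rc'] := rng _ (conj vc (Rle_refl _)); have [rv rv'] := rng _ (conj (Rle_refl _) vc).
have [bot top] := ends _ _ Eci; have [_ ctop] := ends _ _ Epc; rewrite yci in top.
split=> side.
- have := edge_curves_order_stable Eci Epc (nesym pv) vc' cip cic rc rc' rv rv'.
  by rewrite bot top ctop; apply.
- have := edge_curves_order_stable Epc Eci pv (nesym cip) (nesym vc') (nesym cic) rc' rc rv' rv.
  by rewrite bot top ctop; apply.
Qed.

Lemma out_fan_middle_pred_above (v c1 c c2 p : 'I_n) :
  E v c1 -> E v c -> E v c2 -> y c1 = y c -> y c2 = y c -> x c1 < x c < x c2 ->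
  E p c -> p <> v -> (y v < y p)%Z.
Proof.
move=> Ec1 Ec Ec2 yc1 yc2 [xc1 xc2] Epc pv.
case: (Z_lt_le_dec (y v) (y p)) => // pv_le; exfalso.
have c1c : c1 <> c by move=> e; rewrite e in xc1; lra.
have c2c : c2 <> c by move=> e; rewrite e in xc2; lra.
have := (out_edge_separates Ec1 Epc yc1 c1c pv pv_le).1 xc1.
have := (out_edge_separates Ec2 Epc yc2 c2c pv pv_le).2 xc2.
lra.
Qed.

End UpwardPlanarDrawing.

Lemma upward_planar_layered_drawing_reverse n (E : rel 'I_n) x y g :
  upward_planar_layered_drawing E x y g ->
  upward_planar_layered_drawing (fun u v => E v u) x (fun u => (- y u)%Z)
    (fun u v t => g v u (- t)).
Proof.
move=> [inj [up [cont [ends [avoid cross]]]]].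
split; [|split; [|split; [|split; [|split]]]].
- by move=> u v xuv /Z.opp_inj; apply: inj.
- by move=> u v /up; lia.
- move=> u v Evu t; apply: (continuity_pt_comp Ropp (g v u)); last exact: cont.
  by apply: continuity_pt_opp; apply: derivable_continuous_pt; apply: derivable_pt_id.
- by move=> u v /ends[bot top]; rewrite !opp_IZR !Ropp_involutive.
- move=> u v w Evu wu wv; rewrite !opp_IZR Ropp_involutive => ht.
  by apply: avoid => //; lra.
move=> u v u' v' Evu Evu' uv t; rewrite !opp_IZR => ht ht' eqt.
have [|w [hw [hw' tw]]] := cross _ _ _ _ Evu Evu' _ (- t) ltac:(lra) ltac:(lra) eqt.
  by move=> [e1 e2]; apply: uv; rewrite e1 e2.
by exists w; rewrite opp_IZR; split; [|split]; [tauto | tauto | lra].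
Qed.

Lemma in_fan_middle_succ_below n (E : rel 'I_n) x y g (v c1 c c2 q : 'I_n) :
  upward_planar_layered_drawing E x y g -> paths_length_le1 E ->
  E c1 v -> E c v -> E c2 v -> y c1 = y c -> y c2 = y c -> x c1 < x c < x c2 ->
  E c q -> q <> v -> (y q < y v)%Z.
Proof.
move=> drawing no_path2 Ec1 Ec Ec2 yc1 yc2 xc Ecq qv.
have no_path2' : paths_length_le1 (fun u v => E v u) by move=> u w z h1 h2; exact: no_path2 h2 h1.
have := out_fan_middle_pred_above (upward_planar_layered_drawing_reverse drawing) no_path2'
  Ec1 Ec Ec2 ltac:(by rewrite /= yc1) ltac:(by rewrite /= yc2) xc Ecq qv.
lia.
Qed.

Lemma middle_of_three (T : eqType) (X : T -> R) (c1 c2 c3 : T) :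
  X c1 <> X c2 -> X c1 <> X c3 -> X c2 <> X c3 ->
  exists a m z, [/\ a \in [:: c1; c2; c3], m \in [:: c1; c2; c3], z \in [:: c1; c2; c3]
    & X a < X m < X z].
Proof.
have in1 : c1 \in [:: c1; c2; c3] by rewrite inE eqxx.
have in2 : c2 \in [:: c1; c2; c3] by rewrite !inE eqxx orbT.
have in3 : c3 \in [:: c1; c2; c3] by rewrite !inE eqxx !orbT.
move=> n12 n13 n23.
case: (Rlt_or_le (X c1) (X c2)) => o12; case: (Rlt_or_le (X c1) (X c3)) => o13;
  case: (Rlt_or_le (X c2) (X c3)) => o23.
- by exists c1, c2, c3; split=> //; lra.
- by exists c1, c3, c2; split=> //; lra.
- lra.
- by exists c3, c1, c2; split=> //; lra.
- by exists c2, c1, c3; split=> //; lra.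
- lra.
- by exists c2, c3, c1; split=> //; lra.
- by exists c3, c2, c1; split=> //; lra.
Qed.

Close Scope R_scope.

Lemma pigeonhole3 (T : eqType) (K : nat) (s : seq T) (f : T -> nat) :
  uniq s -> (forall r, r \in s -> 0 < f r <= K) -> 2 * K < size s ->
  exists r1 r2 r3, [/\ uniq [:: r1; r2; r3], {subset [:: r1; r2; r3] <= s}
    & f r2 = f r1 /\ f r3 = f r1].
Proof.
elim: K s => [|K IH] s uniq_s f_rng size_s.
  by case: s uniq_s f_rng size_s => [|r s] // _ /(_ r (mem_head _ _)); lia.
set top := [seq r <- s | f r == K.+1]; set rest := [seq r <- s | f r != K.+1].
have size_split : size top + size rest = size s.
  by rewrite !size_filter; apply: (count_predC (fun r => f r == K.+1)).
case: (leqP 3 (size top)) => [|small_top].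
  have top_s : {subset top <= s} by move=> r; rewrite mem_filter => /andP[].
  have top_f : forall r, r \in top -> f r = K.+1 by move=> r; rewrite mem_filter => /andP[/eqP].
  have uniq_top : uniq top by apply: filter_uniq.
  case: top top_s top_f uniq_top {size_split} => [|r1 [|r2 [|r3 A]]] //= top_s top_f uniq_top _.
  exists r1, r2, r3; split.
  - by move: uniq_top; rewrite !inE !negb_or => /and4P[/and3P[-> -> _] /andP[-> _] _ _].
  - by move=> r hr; apply: top_s; move: hr; rewrite !inE => /or3P[] ->; rewrite ?orbT.
  - by rewrite !top_f ?inE ?eqxx ?orbT.
have [r1 [r2 [r3 [uniq_r sub_rest eq_f]]]] := IH rest (filter_uniq _ uniq_s)
  ltac:(by move=> r; rewrite mem_filter => /andP[/eqP ne /f_rng]; lia) ltac:(lia).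
by exists r1, r2, r3; split=> // r /sub_rest; rewrite mem_filter => /andP[].
Qed.

Lemma uniq_cycle_neighbours (T : eqType) (e : rel T) (c : seq T) (m : T) :
  3 <= size c -> uniq c -> cycle e c -> m \in c ->
  exists a z, [/\ a \in c, z \in c, a != z, e m a & e z m].
Proof.
move=> size_c uniq_c cycle_c /rot_to[i s rot_c].
rewrite -(size_rot i) rot_c in size_c; rewrite -(rot_uniq i) rot_c in uniq_c.
rewrite -(rot_cycle i) rot_c in cycle_c.
case: s rot_c size_c uniq_c cycle_c => [|a [|a' r]] //= rot_c _ /andP[_ /andP[a_notin _]].
move=> /andP[ema]; rewrite rcons_path => /andP[_ /andP[_ ezm]].
have mem_c w : (w \in c) = (w \in m :: a :: a' :: r) by rewrite -(mem_rot i) rot_c.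
exists a, (last a' r); rewrite !mem_c; split=> //.
- by rewrite !inE eqxx orbT.
- by apply/mem_behead/mem_behead/mem_last.
by apply: contraNneq a_notin => ->; rewrite mem_last.
Qed.

(** * The alternating complete b-ary tree *)

Definition child_of (b : nat) (p q : nat * nat) : bool :=
  (q.1 == p.1.+1) && (q.2 %/ b == p.2).

Lemma child_of_parent_unique b (p q r : nat * nat) : child_of b p r -> child_of b q r -> p = q.
Proof.
case: p q r => [? ?] [? ?] [? ?] /andP[/eqP/= e1 /eqP/= e2] /andP[/eqP/= e3 /eqP/= e4].
by congr pair; lia.
Qed.

Lemma child_of_monotone b (p q p' q' : nat * nat) :
  child_of b p q -> child_of b p' q' -> p.2 < p'.2 -> q.2 < q'.2.
Proof.
move=> /andP[_ /eqP <-] /andP[_ /eqP <-]; rewrite !ltnNge; apply: contra.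
exact: leq_div2r.
Qed.

Definition alternating_edge (b : nat) (p q : nat * nat) : bool :=
  child_of b p q && ~~ odd p.1 || child_of b q p && odd q.1.

Section AlternatingTree.

Variables b D : nat.
Hypothesis b_gt0 : 0 < b.

Definition nodes : seq (nat * nat) :=
  [seq p <- [seq (k, j) | k <- iota 0 D.+1, j <- iota 0 (b ^ D)] | p.2 < b ^ p.1].

Local Notation V := 'I_(size nodes).

Definition node (u : V) : nat * nat := nth (0, 0) nodes u.

Definition alt_tree : rel V := fun u v => alternating_edge b (node u) (node v).

Lemma mem_nodes p : (p \in nodes) = (p.1 <= D) && (p.2 < b ^ p.1).
Proof.
case: p => k j; rewrite mem_filter andbC.
apply/andP/andP => [[/allpairsP[[k' j'] [+ _ [-> ->]]] jb] | [kD jb]].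
  by rewrite mem_iota => kD.
split=> //; apply: allpairs_f; rewrite mem_iota //=.
by apply: leq_trans jb (leq_pexp2l b_gt0 kD).
Qed.

Lemma uniq_nodes : uniq nodes.
Proof.
by apply/filter_uniq/allpairs_uniq; rewrite ?iota_uniq // => -[? ?] [? ?] _ _ [-> ->].
Qed.

Lemma node_in (u : V) : node u \in nodes.
Proof. exact: mem_nth. Qed.

Lemma node_inj : injective node.
Proof.
move=> u v e; apply: val_inj; apply/eqP.
by rewrite -(nth_uniq (0, 0) (ltn_ord u) (ltn_ord v) uniq_nodes) /node -/(node u) e.
Qed.

Lemma node_surj p : p \in nodes -> exists u : V, node u = p.
Proof. by move=> p_in; exists (Ordinal (etrans (index_mem p nodes) p_in)); apply: nth_index. Qed.

Lemma children_list (v : V) : (node v).1 < D ->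
  exists cs : seq V, [/\ uniq cs, size cs = b & forall c, c \in cs -> child_of b (node v) (node c)].
Proof.
move=> kD; have := node_in v; rewrite mem_nodes => /andP[_ jk].
set k := (node v).1 in kD jk *; set j := (node v).2 in jk *.
pose child r : V := insubd v (index (k.+1, j * b + r) nodes).
have node_child r : r < b -> node (child r) = (k.+1, j * b + r).
  move=> rb; have p_in : (k.+1, j * b + r) \in nodes.
    by rewrite mem_nodes /= kD expnSr; nia.
  by rewrite /node val_insubd index_mem p_in nth_index.
exists [seq child r | r <- iota 0 b]; split.
- rewrite map_inj_in_uniq ?iota_uniq // => r r'; rewrite !mem_iota /= => rb r'b.
  by move/(congr1 node); rewrite !node_child // => -[]; lia.
- by rewrite size_map size_iota.
- move=> c /mapP[r]; rewrite mem_iota /= => rb ->.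
  by rewrite /child_of node_child //= eqxx divnMDl // divn_small // addn0 eqxx.
Qed.

Lemma alt_tree_child_edge (p c : V) : child_of b (node p) (node c) ->
  if odd (node p).1 then alt_tree c p else alt_tree p c.
Proof. by move=> pc; rewrite /alt_tree /alternating_edge pc; case: odd; rewrite ?orbT. Qed.

Lemma size_nodes_ge : b ^ D <= size nodes.
Proof.
rewrite -(size_iota 0 (b ^ D)) -(size_map (pair D)); apply: uniq_leq_size.
  by rewrite map_inj_uniq ?iota_uniq // => ? ? [].
by move=> _ /mapP[j j_in ->]; rewrite mem_nodes leqnn; move: j_in; rewrite mem_iota.
Qed.

Lemma size_nodes_le : size nodes <= D.+1 * b ^ D.
Proof. by rewrite size_filter (leq_trans (count_size _ _)) // size_allpairs !size_iota. Qed.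

Lemma alt_tree_parity (u v : V) : alt_tree u v -> ~~ odd (node u).1 && odd (node v).1.
Proof.
by case/orP=> /andP[/andP[/eqP e _] par]; rewrite ?e /= ?negbK ?par.
Qed.

Lemma alt_tree_no_path2 : paths_length_le1 alt_tree.
Proof. by move=> u v w /alt_tree_parity/andP[_ odd_v] /alt_tree_parity; rewrite odd_v. Qed.

Lemma alt_tree_dag : dag alt_tree.
Proof.
move=> u [|v [|w p]] //= /andP[Euv]; last by move=> /andP[/(alt_tree_no_path2 Euv)].
move=> _ vu; move: Euv; rewrite vu => /alt_tree_parity.
by case: odd.
Qed.

Lemma symrel_alt_tree (u v : V) :
  symrel alt_tree u v = child_of b (node u) (node v) || child_of b (node v) (node u).
Proof.
rewrite /symrel /alt_tree /alternating_edge.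
by case: (child_of b (node u) (node v)); case: (child_of b (node v) (node u));
   case: odd; case: odd.
Qed.

Lemma connect_root (r u : V) : node r = (0, 0) -> connect (symrel alt_tree) u r.
Proof.
move=> root; move: {2}(node u).1 (erefl (node u).1) => k.
elim: k u => [|k IH] u level_u.
  have := node_in u; rewrite mem_nodes level_u expn0 ltnS leqn0 => /andP[_ /eqP ju].
  suff -> : u = r by [].
  by apply: node_inj; rewrite root; case: (node u) level_u ju => ? ? /= -> ->.
have /node_surj[p node_p] : (k, (node u).2 %/ b) \in nodes.
  have := node_in u; rewrite !mem_nodes level_u /= => /andP[kD ju].
  by rewrite ltn_divLR // -expnSr (leq_trans _ kD).
apply: connect_trans (IH p _); last by rewrite node_p.
apply: connect1; rewrite symrel_alt_tree node_p /child_of level_u /= !eqxx.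
by rewrite orbT.
Qed.

Lemma alt_tree_acyclic (c : seq V) : 3 <= size c -> uniq c -> ~~ cycle (symrel alt_tree) c.
Proof.
move=> size_c uniq_c; apply/negP => cycle_c.
case: c => [|i0 c0] // in size_c uniq_c cycle_c *.
have [m m_in m_max] := @arg_maxnP _ i0 (mem (i0 :: c0)) (fun i => (node i).1) (mem_head _ _).
have [a [z [a_in z_in az ema ezm]]] := uniq_cycle_neighbours size_c uniq_c cycle_c m_in.
have parent_of_m w : w \in i0 :: c0 ->
    child_of b (node m) (node w) || child_of b (node w) (node m) -> child_of b (node w) (node m).
  move=> /m_max w_le /orP[/andP[/eqP w_lvl _]|//].
  by move: w_le; rewrite /= w_lvl ltnn.
have pa := parent_of_m a a_in ltac:(by rewrite -symrel_alt_tree).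
have pz := parent_of_m z z_in ltac:(by rewrite orbC -symrel_alt_tree).
by move: az; rewrite (node_inj (child_of_parent_unique pa pz)) eqxx.
Qed.

Lemma alt_tree_directed_tree : directed_tree alt_tree.
Proof.
split; first exact: alt_tree_dag.
split; last exact: alt_tree_acyclic.
have /node_surj[r root] : (0, 0) \in nodes by rewrite mem_nodes expn0.
have sym : connect_sym (symrel alt_tree) by apply: sym_connect_sym => u v; rewrite /symrel orbC.
by move=> u v; rewrite (connect_trans (connect_root u root)) // sym connect_root.
Qed.

(** * A straight-line upward-planar drawing *)

(* Node (k, j) is drawn at x = k and height b^(D-k) j, raised by b^D on odd
   levels: the children of (k, j) fill the band of heights b^(D-k) [j, j+1) in
   the order of their indices, so edges between two levels do not cross, and
   every edge goes up from an even level to an odd one. *)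
Definition height (p : nat * nat) : nat :=
  b ^ (D - p.1) * p.2 + (if odd p.1 then b ^ D else 0).

Lemma height_lt_same_level p q : p.1 = q.1 -> p.2 < q.2 -> height p < height q.
Proof.
case: p q => [k j] [_ j'] /= <- jj'; rewrite /height /= ltn_add2r ltn_pmul2l //.
by rewrite expn_gt0 b_gt0.
Qed.

Lemma height_inj_same_level p q : p.1 = q.1 -> height p = height q -> p = q.
Proof.
case: p q => [k j] [_ j'] /= <- eq_h; congr pair.
have [jj'|jj'|//] := ltngtP j j'.
- by have := @height_lt_same_level (k, j) (k, j') erefl jj'; rewrite eq_h ltnn.
- by have := @height_lt_same_level (k, j') (k, j) erefl jj'; rewrite eq_h ltnn.
Qed.

Lemma height_child p q : child_of b p q -> q.1 <= D ->
  if odd p.1 then height q < height p else height p < height q.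
Proof.
case: p q => [k j] [_ j'] /andP[/= /eqP -> /eqP jq] /= kD.
have j'_eq : j' = j * b + j' %% b by rewrite -jq; apply: divn_eq.
have scale : b ^ (D - k) = b ^ (D - k.+1) * b by rewrite -expnSr subnSK.
have step_gt0 : 0 < b ^ (D - k.+1) by rewrite expn_gt0 b_gt0.
have mod_lt : b ^ (D - k.+1) * (j' %% b) < b ^ (D - k.+1) * b by rewrite ltn_pmul2l // ltn_mod.
have level_le : b ^ (D - k) <= b ^ D by apply: leq_pexp2l; rewrite ?leq_subr.
rewrite /height /= scale j'_eq; case: (odd k) => /=; nia.
Qed.

Lemma child_node_height (P C : V) : child_of b (node P) (node C) ->
  if odd (node P).1 then height (node C) < height (node P) else height (node P) < height (node C).
Proof. by move=> PC; apply: height_child; have := node_in C; rewrite mem_nodes => /andP[]. Qed.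

Lemma alt_tree_height_lt (u v : V) : alt_tree u v -> height (node u) < height (node v).
Proof.
by case/orP=> /andP[h par]; have := child_node_height h; rewrite ?(negbTE par) ?par.
Qed.

Open Scope R_scope.

Lemma ratio_in_unit_interval (a c t : R) :
  a <> c -> a <= t <= c \/ c <= t <= a -> 0 <= (t - a) / (c - a) <= 1.
Proof.
move=> ac ht; have : (t - a) / (c - a) * (c - a) = t - a by field; lra.
by case: ht => ht; case: (Rlt_le_dec a c) => ac'; nra.
Qed.

Lemma level_add_frac_eq (a c : nat) (l1 l2 : R) : 0 <= l1 <= 1 -> 0 <= l2 <= 1 ->
  INR a + l1 = INR c + l2 ->
  (a = c /\ l1 = l2) \/ (c = a.+1 /\ l1 = 1 /\ l2 = 0) \/ (a = c.+1 /\ l1 = 0 /\ l2 = 1).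
Proof.
move=> l1_01 l2_01 e.
have [ac|ca|ac] := ltngtP a c; last by left; split=> //; rewrite ac in e; lra.
- have [c_eq|/leP/le_INR] : c = a.+1 \/ (a.+2 <= c)%N by lia.
    by rewrite c_eq S_INR in e *; right; left; split=> //; lra.
  by rewrite !S_INR; lra.
- have [a_eq|/leP/le_INR] : a = c.+1 \/ (c.+2 <= a)%N by lia.
    by rewrite a_eq S_INR in e *; right; right; split=> //; lra.
  by rewrite !S_INR; lra.
Qed.

Definition tree_x (u : V) : R := INR (node u).1.
Definition tree_y (u : V) : Z := Z.of_nat (height (node u)).
Definition tree_curve (u v : V) (t : R) : R :=
  tree_x u + (tree_x v - tree_x u) / (IZR (tree_y v) - IZR (tree_y u)) * (t - IZR (tree_y u)).

Local Notation hR w := (INR (height (node w))).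

Lemma IZR_tree_y (u : V) : IZR (tree_y u) = hR u.
Proof. by rewrite /tree_y -INR_IZR_INZ. Qed.

Lemma tree_x_child (P C : V) : child_of b (node P) (node C) -> tree_x C = tree_x P + 1.
Proof. by case/andP=> /eqP lvl _; rewrite /tree_x lvl S_INR. Qed.

Lemma tree_edge_point (u v : V) (t : R) : alt_tree u v ->
  IZR (tree_y u) <= t <= IZR (tree_y v) ->
  exists P C l, [/\ child_of b (node P) (node C), (u = P /\ v = C) \/ (u = C /\ v = P),
    0 <= l <= 1, t = hR P + l * (hR C - hR P) & tree_curve u v t = tree_x P + l].
Proof.
move=> Euv; rewrite !IZR_tree_y => ht.
have huv : hR u < hR v by apply/lt_INR/ltP/alt_tree_height_lt.
rewrite /tree_curve !IZR_tree_y.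
case/orP: (Euv) => /andP[PC _].
- exists u, v, ((t - hR u) / (hR v - hR u)); rewrite (tree_x_child PC).
  split; [done | by left | | field | field]; try lra.
  by apply: ratio_in_unit_interval; lra.
- exists v, u, ((t - hR v) / (hR u - hR v)); rewrite (tree_x_child PC).
  split; [done | by right | | field | field]; try lra.
  by apply: ratio_in_unit_interval; lra.
Qed.

Lemma same_level_same_height (u v : V) : (node u).1 = (node v).1 -> hR u = hR v -> u = v.
Proof. by move=> lvl /INR_eq h; apply/node_inj/height_inj_same_level. Qed.

Lemma tree_curves_same_level_ordered (P1 C1 P2 C2 : V) (l : R) :
  child_of b (node P1) (node C1) -> child_of b (node P2) (node C2) ->
  (node P1).1 = (node P2).1 -> ((node P1).2 < (node P2).2)%N -> 0 <= l <= 1 ->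
  hR P1 + l * (hR C1 - hR P1) < hR P2 + l * (hR C2 - hR P2).
Proof.
move=> PC1 PC2 lvl pos l01.
have /ltP/lt_INR hP : (height (node P1) < height (node P2))%N by apply: height_lt_same_level.
have /ltP/lt_INR hC : (height (node C1) < height (node C2))%N.
  apply: height_lt_same_level; last exact: child_of_monotone PC1 PC2 pos.
  by move: PC1 PC2 => /andP[/eqP -> _] /andP[/eqP -> _]; rewrite lvl.
case: (Req_dec l 1) => [->|l_neq1]; first lra.
have : 0 < (1 - l) * (hR P2 - hR P1) by apply: Rmult_lt_0_compat; lra.
have : 0 <= l * (hR C2 - hR C1) by apply: Rmult_le_pos; lra.
lra.
Qed.

Lemma tree_curve_avoids_nodes (u v w : V) : alt_tree u v -> w <> u -> w <> v ->
  IZR (tree_y u) <= IZR (tree_y w) <= IZR (tree_y v) -> tree_curve u v (IZR (tree_y w)) <> tree_x w.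
Proof.
move=> Euv wu wv /(tree_edge_point Euv)[P [C [l [PC orient l01 tw ->]]]].
rewrite IZR_tree_y in tw; rewrite /tree_x => xw.
have [lvlC _] := andP PC.
case: (level_add_frac_eq l01 (conj (Rle_refl 0) Rle_0_1) (etrans xw (esym (Rplus_0_r _))))
  => [[lvl l0]|[[lvl [l1 _]]|[_ [_ /esym/R1_neq_R0 //]]]].
- have wP : w = P by apply: same_level_same_height; [rewrite lvl | rewrite tw l0; lra].
  by case: orient => -[eu ev]; [apply: wu | apply: wv]; rewrite wP.
- have wC : w = C by apply: same_level_same_height; [rewrite (eqP lvlC) | rewrite tw l1; lra].
  by case: orient => -[eu ev]; [apply: wv | apply: wu]; rewrite wC.
Qed.

Lemma tree_curves_same_level_meet (P1 C1 P2 C2 : V) (l : R) :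
  child_of b (node P1) (node C1) -> child_of b (node P2) (node C2) ->
  (node P1).1 = (node P2).1 -> 0 <= l <= 1 ->
  hR P1 + l * (hR C1 - hR P1) = hR P2 + l * (hR C2 - hR P2) -> P1 = P2 /\ (C1 = C2 \/ l = 0).
Proof.
move=> PC1 PC2 lvl l01 meet.
have [P12|P12] := eqVneq P1 P2.
  rewrite -P12 in PC2 meet *; split=> //.
  have [|C12] := eqVneq C1 C2; [by left | right].
  have lvlC : (node C1).1 = (node C2).1.
    by move: PC1 PC2 => /andP[/eqP -> _] /andP[/eqP -> _].
  have hC : hR C1 <> hR C2 by move=> /(same_level_same_height lvlC) e; rewrite e eqxx in C12.
  have : l * (hR C1 - hR C2) = 0 by lra.
  by case/Rmult_integral => //; lra.
exfalso; have [pos|pos|pos] := ltngtP (node P1).2 (node P2).2.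
- by have := tree_curves_same_level_ordered PC1 PC2 lvl pos l01; lra.
- by have := tree_curves_same_level_ordered PC2 PC1 (esym lvl) pos l01; lra.
- move: P12; rewrite (@node_inj P1 P2) ?eqxx //.
  by case: (node P1) (node P2) lvl pos => [? ?] [? ?] /= -> ->.
Qed.

Lemma tree_curves_meet_at_nodes (u v u' v' : V) : alt_tree u v -> alt_tree u' v' ->
  (u, v) <> (u', v') -> forall t : R,
  IZR (tree_y u) <= t <= IZR (tree_y v) -> IZR (tree_y u') <= t <= IZR (tree_y v') ->
  tree_curve u v t = tree_curve u' v' t ->
  exists w : V, (w = u \/ w = v) /\ (w = u' \/ w = v') /\ t = IZR (tree_y w).
Proof.
move=> Euv Euv' neq t /(tree_edge_point Euv)[P1 [C1 [l1 [PC1 or1 l1_01 t1 ->]]]].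
move=> /(tree_edge_point Euv')[P2 [C2 [l2 [PC2 or2 l2_01 t2 ->]]]] /=.
have ends1 : (P1 = u \/ P1 = v) /\ (C1 = u \/ C1 = v) by case: or1 => -[-> ->]; tauto.
have ends2 : (P2 = u' \/ P2 = v') /\ (C2 = u' \/ C2 = v') by case: or2 => -[-> ->]; tauto.
have [lvlC1 _] := andP PC1; have [lvlC2 _] := andP PC2.
rewrite /tree_x => /(level_add_frac_eq l1_01 l2_01).
case=> [[lvl l12]|[[lvl [l1_1 l2_0]]|[lvl [l1_0 l2_1]]]].
- rewrite -l12 in t2.
  have [P12 [C12|l0]] := tree_curves_same_level_meet PC1 PC2 lvl l1_01 (etrans (esym t1) t2).
    exfalso; rewrite -P12 -C12 in or2.
    case: or1 or2 => -[eu ev] [] [eu' ev']; subst u v u' v'.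
    + by apply: neq.
    + exact: alt_tree_no_path2 Euv Euv'.
    + exact: alt_tree_no_path2 Euv Euv'.
    + by apply: neq.
  rewrite -P12 in ends2.
  by exists P1; rewrite IZR_tree_y t1 l0; split; [tauto | split; [tauto | lra]].
- have CP : C1 = P2.
    apply: same_level_same_height; first by rewrite (eqP lvlC1) lvl.
    by rewrite l1_1 in t1; rewrite l2_0 in t2; lra.
  by exists C1; rewrite IZR_tree_y t1 l1_1; split; [tauto | split; [rewrite CP; tauto | lra]].
- have CP : C2 = P1.
    apply: same_level_same_height; first by rewrite (eqP lvlC2) lvl.
    by rewrite l1_0 in t1; rewrite l2_1 in t2; lra.
  by exists C2; rewrite IZR_tree_y t2 l2_1; split; [rewrite CP; tauto | split; [tauto | lra]].
Qed.

Lemma tree_drawing : upward_planar_layered_drawing alt_tree tree_x tree_y tree_curve.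
Proof.
split; [|split; [|split; [|split; [|split]]]].
- move=> u v /INR_eq lvl /Nat2Z.inj h; exact/node_inj/height_inj_same_level.
- by move=> u v /alt_tree_height_lt; rewrite /tree_y; lia.
- by move=> u v _ t; rewrite /tree_curve; reg.
- move=> u v /alt_tree_height_lt/ltP/lt_INR; rewrite /tree_curve !IZR_tree_y => huv.
  by split; [ring | field; lra].
- exact: tree_curve_avoids_nodes.
- exact: tree_curves_meet_at_nodes.
Qed.

Close Scope R_scope.

(** * Every drawing has a long edge *)

Definition child_spans_below (y : V -> Z) (v : V) (d : Z) : Prop :=
  forall w, child_of b (node v) (node w) -> (Z.abs (y w - y v) < d)%Z.

Lemma shielded_child_exists (x : V -> R) (y : V -> Z) g (S : nat) (v : V) (d : Z) :
  upward_planar_layered_drawing alt_tree x y g -> 2 * S < b -> (d <= Z.of_nat S + 1)%Z ->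
  (node v).1 < D -> child_spans_below y v d ->
  exists w, child_of b (node v) (node w) /\ child_spans_below y w (d - 1).
Proof.
move=> drawing Sb dS kD spans.
have [inj [up _]] := drawing.
have [cs [uniq_cs size_cs cs_child]] := children_list kD.
have edge c : c \in cs -> if odd (node v).1 then alt_tree c v else alt_tree v c.
  by move=> /cs_child; apply: alt_tree_child_edge.
have side c : c \in cs -> if odd (node v).1 then (y c < y v)%Z else (y v < y c)%Z.
  by move=> /edge; case: odd => /up.
have gap_range c : c \in cs -> 0 < Z.to_nat (Z.abs (y c - y v)) <= S.
  move=> c_in; have := spans c (cs_child c c_in).
  by have := side c c_in; case: odd; lia.
have size_cs_gt : 2 * S < size cs by rewrite size_cs.
have [c1 [c2 [c3 [uniq_c sub_c [gap2 gap3]]]]] := pigeonhole3 uniq_cs gap_range size_cs_gt.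
have in1 : c1 \in [:: c1; c2; c3] by rewrite inE eqxx.
have in2 : c2 \in [:: c1; c2; c3] by rewrite !inE eqxx orbT.
have in3 : c3 \in [:: c1; c2; c3] by rewrite !inE eqxx !orbT.
have same_y c : c \in [:: c1; c2; c3] -> y c = y c1.
  have := side c1 (sub_c c1 in1); have := side c2 (sub_c c2 in2).
  have := side c3 (sub_c c3 in3).
  by rewrite !inE => s3 s2 s1 /or3P[] /eqP ->; move: s1 s2 s3; case: odd; lia.
have x_neq c c' : c \in [:: c1; c2; c3] -> c' \in [:: c1; c2; c3] -> c != c' -> (x c <> x c')%R.
  by move=> /same_y yc /same_y yc' /eqP cc' xcc'; apply/cc'/inj; rewrite ?yc ?yc'.
move: (uniq_c); rewrite /= !inE !negb_or => /and3P[/andP[n12 n13] n23 _].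
have [a [m [z [a_in m_in z_in xamz]]]] :=
  middle_of_three (x_neq _ _ in1 in2 n12) (x_neq _ _ in1 in3 n13) (x_neq _ _ in2 in3 n23).
have Ea := edge a (sub_c a a_in); have Em := edge m (sub_c m m_in).
have Ez := edge z (sub_c z z_in).
have ya : y a = y m by rewrite (same_y a a_in) (same_y m m_in).
have yz : y z = y m by rewrite (same_y z z_in) (same_y m m_in).
have vm := cs_child m (sub_c m m_in).
exists m; split=> // w mw.
have lvl_m : (node m).1 = (node v).1.+1 by case/andP: vm => /eqP.
have wv : w <> v.
  by move=> wv; case/andP: mw => /eqP; rewrite wv lvl_m => /eqP; rewrite ltn_eqF.
have Emw := alt_tree_child_edge mw; rewrite lvl_m /= in Emw.
have span_m := spans m vm.
case: (odd (node v).1) Ea Em Ez Emw => /= Ea Em Ez Emw.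
- have := in_fan_middle_succ_below drawing alt_tree_no_path2 Ea Em Ez ya yz xamz Emw wv.
  by have := up _ _ Em; have := up _ _ Emw; clear -span_m; lia.
- have := out_fan_middle_pred_above drawing alt_tree_no_path2 Ea Em Ez ya yz xamz Emw wv.
  by have := up _ _ Em; have := up _ _ Emw; clear -span_m; lia.
Qed.

Lemma alt_tree_long_edge (x : V -> R) (y : V -> Z) g (S : nat) :
  upward_planar_layered_drawing alt_tree x y g -> 2 * S < b -> S < D ->
  exists u v, alt_tree u v /\ (Z.of_nat S < y v - y u)%Z.
Proof.
move=> drawing Sb SD; apply: NNPP => no_long.
have short u v : alt_tree u v -> (y v - y u <= Z.of_nat S)%Z.
  move=> Euv; case: (Z_lt_le_dec (Z.of_nat S) (y v - y u)) => // long.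
  by case: no_long; exists u, v.
have [_ [up _]] := drawing.
have /node_surj[r root] : (0, 0) \in nodes by rewrite mem_nodes expn0.
have descend i : i <= S ->
    exists v, (node v).1 = i /\ child_spans_below y v (Z.of_nat S + 1 - Z.of_nat i).
  elim: i => [|i IH] iS.
    exists r; split=> [|w rw]; first by rewrite root.
    have := alt_tree_child_edge rw; rewrite root /= => Erw.
    by have := short _ _ Erw; have := up _ _ Erw; lia.
  have [v [lvl spans]] := IH (ltnW iS).
  have dS : (Z.of_nat S + 1 - Z.of_nat i <= Z.of_nat S + 1)%Z by lia.
  have kD : (node v).1 < D by rewrite lvl (leq_trans iS (ltnW SD)).
  have [w [/andP[/eqP lvl_w _] spans_w]] := shielded_child_exists drawing Sb dS kD spans.
  exists w; split=> [|u wu]; first by rewrite lvl_w lvl.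
  by have := spans_w u wu; lia.
have [v [lvl spans]] := descend S (leqnn S).
have dS : (Z.of_nat S + 1 - Z.of_nat S <= Z.of_nat S + 1)%Z by lia.
have kD : (node v).1 < D by rewrite lvl.
have [w [vw _]] := shielded_child_exists drawing Sb dS kD spans.
by have := spans w vw; have := alt_tree_child_edge vw; case: odd => /up; lia.
Qed.

End AlternatingTree.

Arguments alt_tree : clear implicits.
Arguments tree_x : clear implicits.
Arguments tree_y : clear implicits.
Arguments tree_curve : clear implicits.

(** * Size of the tree *)

Lemma tree_size_le_pow (S : nat) : 7 <= S -> S.+2 * S.*2.+1 ^ S.+1 <= S.+1 ^ S.*2.
Proof.
move=> S_ge7.
have lhs_le : S.+2 * S.*2.+1 ^ S.+1 <= 2 ^ S.+2 * S.+1 ^ S.+2.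
  rewrite -expnMn mul2n doubleS [leqRHS]expnS leq_mul //; first lia.
  by rewrite leq_exp2r.
have two_pow : 2 ^ S.+2 <= S.+1 ^ (S - 2).
  apply: leq_trans (_ : 8 ^ (S - 2) <= _); last by rewrite leq_exp2r ?subn_gt0; lia.
  by rewrite (_ : 8 = 2 ^ 3) // -expnM leq_exp2l //; lia.
apply: leq_trans lhs_le _.
by rewrite (_ : S.*2 = (S - 2) + S.+2); [rewrite expnD leq_mul2r two_pow orbT | lia].
Qed.

Open Scope R_scope.

Lemma INR_expn (a e : nat) : INR (a ^ e)%N = INR a ^ e.
Proof. by elim: e => [|e IH] //; rewrite expnS -multE mult_INR IH. Qed.

Lemma log2_le (r s : R) : 0 < r -> r <= s -> log2 r <= log2 s.
Proof.
have ln2_gt0 : 0 < ln 2 by have := ln_lt_2; lra.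
move=> r_gt0 [rs|->]; last lra.
by apply: Rmult_le_compat_r; [apply/Rlt_le/Rinv_0_lt_compat | apply/Rlt_le/ln_increasing].
Qed.

Lemma log2_pow (r : R) (k : nat) : 0 < r -> log2 (r ^ k) = INR k * log2 r.
Proof. by move=> r_gt0; rewrite /log2 ln_pow //; lra. Qed.

Lemma log2_2 : log2 2 = 1.
Proof. by rewrite /log2 Rdiv_diag //; have := ln_lt_2; lra. Qed.

Lemma log2_ratio_le (n S : nat) : (1 <= S)%N -> (2 ^ S.+1 <= n)%N -> (n <= S.+1 ^ S.*2)%N ->
  log2 (INR n) / (2 * log2 (log2 (INR n))) <= INR S.
Proof.
move=> S_ge1 /leP/le_INR n_ge /leP/le_INR n_le.
rewrite !INR_expn (_ : INR 2 = 2) in n_ge n_le; last by rewrite /=; lra.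
have S1_ge2 : 2 <= INR S.+1 by rewrite S_INR; have /leP/(le_INR 1) /= := S_ge1; lra.
have n_gt0 : 0 < INR n by apply: Rlt_le_trans n_ge; apply: pow_lt; lra.
set L := log2 (INR n).
have L_ge : INR S.+1 <= L.
  rewrite -[INR S.+1]Rmult_1_r -log2_2 -log2_pow; last lra.
  by apply: log2_le => //; apply: pow_lt; lra.
have L_le : L <= 2 * INR S * log2 (INR S.+1).
  have -> : 2 * INR S = INR S.*2 by rewrite -addnn -plusE plus_INR; lra.
  by rewrite -log2_pow; [apply: log2_le | lra].
have logS_gt0 : 0 < log2 (INR S.+1) by have := log2_le (Rlt_0_2) S1_ge2; rewrite log2_2; lra.
have logS_le : log2 (INR S.+1) <= log2 L by apply: log2_le; lra.
rewrite /Rdiv; apply: (Rmult_le_reg_r (2 * log2 L)); first lra.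
rewrite Rmult_assoc Rinv_l ?Rmult_1_r; last lra.
have := Rmult_le_compat_l (2 * INR S) _ _ (ltac:(have := pos_INR S; lra)) logS_le; lra.
Qed.

Close Scope R_scope.

Theorem mainTheorem4 :
  forall m : nat, exists n : nat, (m < n)%N /\
    exists E : rel 'I_n,
      directed_tree E /\ paths_length_le1 E /\
      span_gt E (Rdiv (log2 (INR n)) (Rmult (IZR 2) (log2 (log2 (INR n))))).
Proof.
move=> m; set S := (m + 7)%N; set b := S.*2.+1; set D := S.+1.
have b_gt0 : 0 < b by [].
have n_ge : 2 ^ S.+1 <= size (nodes b D).
  by apply: leq_trans _ (size_nodes_ge D b_gt0); rewrite /D leq_exp2r // /b; lia.
have n_le : size (nodes b D) <= S.+1 ^ S.*2.
  apply: leq_trans (size_nodes_le b D) _; rewrite /b /D.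
  by apply: tree_size_le_pow; rewrite /S; lia.
exists (size (nodes b D)); split.
  by apply: leq_trans n_ge; apply: ltn_trans (ltn_expl _ _); lia.
exists (alt_tree b D); split; first exact: alt_tree_directed_tree.
split; first exact: alt_tree_no_path2.
split; first by exists (tree_x b D), (tree_y b D), (tree_curve b D); apply: tree_drawing.
move=> x y g drawing.
have Sb : 2 * S < b by rewrite /b; lia.
have [u [v [Euv long]]] := alt_tree_long_edge b_gt0 drawing Sb (ltnSn S).
exists u, v; split=> //; apply: Rle_lt_trans (log2_ratio_le _ n_ge n_le) _.
  by rewrite /S; lia.
by rewrite INR_IZR_INZ; apply: IZR_lt.
Qed.
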